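(* Let $S$ be a collection of non-vertical segments in $\mathbb{R}^3$ in general position, let $G_S$ be the mixed graph associated to $S$ (defined in the context), and let $k\ge 0$ be an integer. Then all depth cycles of $S$ can be eliminated with at most $k$ cuts if and only if $G_S$ admits a feedback vertex set of size at most $k$.
   Context: Segments are closed line segments in $\mathbb{R}^3$, non-vertical meaning not parallel to the $z$-axis. For a segment $s$ let $\bar s$ be its orthogonal projection to the $xy$-plane. General position: segments are pairwise disjoint in $\mathbb{R}^3$; any two projections meet in at most one point; no point of the plane lies on three or more projections. Relation: $s \succ s'$ if some vertical line $\ell$ meets both $s$ and $s'$ and the $z$-coordinate of $\ell\cap s$ exceeds that of $\ell\cap s'$. A depth cycle is a sequence $s_1\succ s_2\succ\dots\succ s_p=s_1$ ($p\ge2$). Cutting a segment $s$ at points $q_1,\dots,q_m\in s$ replaces $s$ by the connected components of $s\setminus\{q_1,\dots,q_m\}$, and $\succ$ is evaluated on the resulting pieces; each cut point counts as one cut. Depth cycles are eliminated if the resulting pieces have no depth cycle. Mixed graphs: a mixed graph $(V,E,A)$ has vertex set $V$, a set $E$ of undirected edges $\{u,v\}$ and a set $A$ of directed arcs $(u,v)$ (tail $u$, head $v$). A cycle is a sequence $v_1,\dots,v_\ell$ with $v_\ell=v_1$, $\ell\ge3$, $v_1,\dots,v_{\ell-1}$ pairwise distinct, such that for each $1\le i\le \ell-1$ either $\{v_i,v_{i+1}\}\in E$ or $(v_i,v_{i+1})\in A$, and no undirected edge is used twice. A feedback vertex set is a set $U\subseteq V$ such that the graph obtained by deleting $U$ has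 no cycle. The graph $G_S=(V,E,A)$: for $s\in S$ let $I(s)$ be the set of points where $\bar s$ meets $\bar t$ for some $t\in S\setminus\{s\}$, listed in order along $\bar s$ as $p^s_1,\dots,p^s_{|I(s)|}$. For each $s$ create vertices $v^s_1,\dots,v^s_{|I(s)|}$ ($v^s_i$ represents $p^s_i$, i.e. the point of $s$ above $p^s_i$), and let $V$ be the union over all $s\in S$. For each $s$ add undirected edges $\{v^s_i,v^s_{i+1}\}$ for $1\le i\le |I(s)|-1$. For each pair $s\succ t$ with $\bar s\cap\bar t\neq\emptyset$, if $p^s_i=p^t_j$ is the common point, add the arc $(v^s_i,v^t_j)$. A vertex set $U$ corresponds to the set of cuts that cuts each segment $s$ at the points of $s$ lying above $p^s_i$ for $v^s_i\in U$. *)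

From HB Require Import structures.
From mathcomp Require Import all_boot all_order all_algebra reals.
From Stdlib Require List.
Set Implicit Arguments.
Unset Strict Implicit.
Unset Printing Implicit Defensive.
Import Order.TTheory GRing.Theory Num.Theory.
Local Open Scope ring_scope.

Section Geometry.
Variable R : realType.

Record pt := Pt { px : R; py : R; pz : R }.

Definition proj (p : pt) : R * R := (px p, py p).

Definition lerp (p q : pt) (t : R) : pt :=
  Pt (px p + t * (px q - px p)) (py p + t * (py q - py p)) (pz p + t * (pz q - pz p)).

Definition lerp2 (p q : R * R) (t : R) : R * R :=
  (p.1 + t * (q.1 - p.1), p.2 + t * (q.2 - p.2)).

Record seg := Seg { sa : pt; sb : pt }.

Definition closed_between (x y z : pt) : Prop :=
  exists t : R, 0 <= t <= 1 /\ z = lerp x y t.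

Definition on_seg (s : seg) (p : pt) : Prop := closed_between (sa s) (sb s) p.

Definition on_pseg (s : seg) (q : R * R) : Prop :=
  exists t : R, 0 <= t <= 1 /\ q = lerp2 (proj (sa s)) (proj (sb s)) t.

Definition nonvertical (s : seg) : Prop := proj (sa s) <> proj (sb s).

Variable I : finType.

Definition general_position (s : I -> seg) : Prop :=
  (forall i j : I, i <> j -> forall p, on_seg (s i) p -> on_seg (s j) p -> False) /\
  (forall i j : I, i <> j -> forall q q',
      on_pseg (s i) q -> on_pseg (s j) q -> on_pseg (s i) q' -> on_pseg (s j) q' -> q = q') /\
  (forall (q : R * R) (i j l : I), i <> j -> j <> l -> i <> l ->
      on_pseg (s i) q -> on_pseg (s j) q -> on_pseg (s l) q -> False).

Definition above (A B : pt -> Prop) : Prop :=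
  exists p p' : pt, A p /\ B p' /\ proj p = proj p' /\ pz p' < pz p.

(* a depth cycle in a family F of (pieces of) segments:
   P_0 > P_1 > ... > P_n = P_0 with n >= 1 (i.e. p = n+1 >= 2) *)
Definition has_depth_cycle (F : (pt -> Prop) -> Prop) : Prop :=
  exists (n : nat) (P : nat -> (pt -> Prop)),
    (1 <= n)%N /\ (forall j, (j <= n)%N -> F (P j)) /\
    (forall j, (j < n)%N -> above (P j) (P j.+1)) /\ P n = P 0%N.

(* Cutting at the set of points Q: the piece (connected component of
   s_i \ Q) containing x, i.e. all y on s_i such that the closed
   subsegment [x,y] of s_i avoids Q. *)
Definition piece (s : I -> seg) (Q : pt -> Prop) (i : I) (x : pt) : pt -> Prop :=
  fun y => on_seg (s i) y /\ (forall z, closed_between x y z -> ~ Q z).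

Definition pieces (s : I -> seg) (Q : pt -> Prop) : (pt -> Prop) -> Prop :=
  fun P => exists (i : I) (x : pt), on_seg (s i) x /\ ~ Q x /\ P = piece s Q i x.

Definition eliminable_with (s : I -> seg) (k : nat) : Prop :=
  exists Q : seq pt, (size Q <= k)%N /\
    (forall q, List.In q Q -> exists i, on_seg (s i) q) /\
    ~ has_depth_cycle (pieces s (fun p => List.In p Q)).

(* Vertex v^{s_i}_m is represented by the pair (i, p) where p = p^{s_i}_m
   is the corresponding point of I(s_i). *)
Definition vtx := (I * (R * R))%type.

Definition is_vertex (s : I -> seg) (v : vtx) : Prop :=
  exists j : I, j <> v.1 /\ on_pseg (s v.1) v.2 /\ on_pseg (s j) v.2.

(* undirected edges: consecutive points of I(s_i) along \bar s_i *)
Definition gedge (s : I -> seg) (v w : vtx) : Prop :=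
  v.1 = w.1 /\ is_vertex s v /\ is_vertex s w /\ v.2 <> w.2 /\
  (forall q, is_vertex s (v.1, q) ->
     ~ (exists t : R, 0 < t < 1 /\ q = lerp2 v.2 w.2 t)).

Definition garc (s : I -> seg) (v w : vtx) : Prop :=
  v.1 <> w.1 /\ v.2 = w.2 /\ is_vertex s v /\ is_vertex s w /\
  above (on_seg (s v.1)) (on_seg (s w.1)).

Definition same_upair (a b c d : vtx) : Prop :=
  (a = c /\ b = d) \/ (a = d /\ b = c).

(* a cycle v_0, ..., v_m = v_0 (length l = m+1 >= 3) of G_S all of whose
   vertices lie in the set W (W = V \ U for the graph with U deleted);
   c j says whether step j uses an undirected edge (true) or an arc (false) *)
Definition has_cycle_in (s : I -> seg) (W : vtx -> Prop) : Prop :=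
  exists (m : nat) (v : nat -> vtx) (c : nat -> bool),
    (2 <= m)%N /\ v m = v 0%N /\
    (forall j, (j < m)%N -> is_vertex s (v j) /\ W (v j)) /\
    (forall j j', (j < m)%N -> (j' < m)%N -> v j = v j' -> j = j') /\
    (forall j, (j < m)%N ->
       if c j then gedge s (v j) (v j.+1) else garc s (v j) (v j.+1)) /\
    (forall j j', (j < j')%N -> (j' < m)%N -> c j -> c j' ->
       ~ same_upair (v j) (v j.+1) (v j') (v j'.+1)).

Definition has_fvs_of_size (s : I -> seg) (k : nat) : Prop :=
  exists U : seq vtx, (size U <= k)%N /\
    (forall v, List.In v U -> is_vertex s v) /\
    ~ has_cycle_in s (fun v => ~ List.In v U).

End Geometry.

From mathcomp Require Import all_boot all_order all_algebra reals.
From mathcomp Require Import boolp zify.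
From mathcomp Require Import ring lra.
From Stdlib Require List.
Set Implicit Arguments.
Unset Strict Implicit.
Unset Printing Implicit Defensive.
Import Order.TTheory GRing.Theory Num.Theory.
Local Open Scope ring_scope.

(* Every segment s_i is parametrised by t |-> seg_pt i t, t in [0,1]; as s_i is
   not vertical the projection of this map is injective, so points of s_i, of
   its projection and of its pieces are handled through their parameters.

   Feedback vertex set => cuts.  Cut s_i above every vertex (i, p) of U.  Two
   vertices of G_S lying on one piece are joined by undirected edges avoiding
   U (induction on the number of crossings between them), and A > B for two
   pieces yields an arc of G_S - U.  So a depth cycle of pieces gives a closed
   walk of G_S - U using an arc, and shortcutting that walk at repeated
   vertices leaves a cycle (an arc cannot be walked back, so it has >= 3
   vertices).

   Cuts => feedback vertex set.  Each cut point q is charged to at most one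
   vertex: the vertex lying under q, or else an endpoint of the undirected
   edge under whose interior q lies.  Along a cycle of G_S avoiding the
   charged vertices, edges stay inside one piece and arcs give > between
   pieces; a cycle cannot use edges only (they lie on one segment), so the
   visited pieces form a depth cycle. *)

Section Parametrisation.
Variables (R : realType) (I : finType) (s : I -> seg R).
Hypothesis nv : forall i, nonvertical (s i).
Hypothesis gp : general_position s.

Definition seg_pt (i : I) (t : R) : pt R := lerp (sa (s i)) (sb (s i)) t.

Definition betw (a b t : R) : Prop := (a <= t /\ t <= b) \/ (b <= t /\ t <= a).
Definition sbetw (a b t : R) : Prop := (a < t /\ t < b) \/ (b < t /\ t < a).

Lemma proj_seg_pt_inj i t t' : proj (seg_pt i t) = proj (seg_pt i t') -> t = t'.
Proof.
move: (@nv i); rewrite /nonvertical /seg_pt /proj /lerp /=.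
case: (sa (s i)) => a1 a2 a3; case: (sb (s i)) => b1 b2 b3 /= hne [e1 e2].
case: (eqVneq t t') => // hneq; exfalso; apply: hne.
have h1 : (t - t') * (b1 - a1) = 0 by rewrite mulrBl; lra.
have h2 : (t - t') * (b2 - a2) = 0 by rewrite mulrBl; lra.
move/eqP: h1; move/eqP: h2.
by rewrite !mulf_eq0 !subr_eq0 (negbTE hneq) /= => /eqP -> /eqP ->.
Qed.

Lemma lerp_seg_pt i a b u :
  lerp (seg_pt i a) (seg_pt i b) u = seg_pt i (a + u * (b - a)).
Proof. rewrite /seg_pt /lerp /=; congr Pt; ring. Qed.

Lemma lerp2_seg_pt i a b u :
  lerp2 (proj (seg_pt i a)) (proj (seg_pt i b)) u = proj (seg_pt i (a + u * (b - a))).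
Proof. rewrite /seg_pt /lerp2 /lerp /proj /=; congr pair; ring. Qed.

Lemma sbetw_ratio a b c : sbetw a b c -> exists u, 0 < u < 1 /\ c = a + u * (b - a).
Proof.
move=> hb; have hba : b - a != 0 by rewrite subr_eq0; apply/eqP; case: hb; lra.
exists ((c - a) / (b - a)); split; last by rewrite mulfVK //; ring.
case: hb => [[h1 h2]|[h1 h2]].
- have hlt : 0 < b - a by lra.
  rewrite divr_gt0 /=; [|lra|lra].
  by rewrite ltr_pdivrMr // mul1r ltrD2r.
- have hlt : 0 < - (b - a) by lra.
  rewrite -[(c - a) / (b - a)]mulrNN -invrN divr_gt0 /=; [|lra|lra].
  by rewrite ltr_pdivrMr // mul1r; lra.
Qed.

Lemma ratio_sbetw a b u : a != b -> 0 < u < 1 -> sbetw a b (a + u * (b - a)).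
Proof.
move=> hab /andP [u0 u1]; rewrite /sbetw.
by case: (ltgtP a b) hab => // hab _; [left|right]; nra.
Qed.

Lemma betw_sbetw a b t : betw a b t -> t != a -> t != b -> sbetw a b t.
Proof.
move=> hb hta htb; rewrite /sbetw !lt_neqAle hta htb ![_ == t]eq_sym hta htb /=.
by case: hb => -[-> ->]; [left|right].
Qed.

Lemma closed_betweenP i a b z :
  closed_between (seg_pt i a) (seg_pt i b) z <-> exists t, betw a b t /\ z = seg_pt i t.
Proof.
split.
- move=> [u [/andP [u0 u1] ->]]; exists (a + u * (b - a)).
  split; last exact: lerp_seg_pt.
  by rewrite /betw; case: (lerP a b) => hab; [left|right]; nra.
- move=> [t [hb ->]]; case: (eqVneq a b) => [eab|hab].
    subst b; exists 0; rewrite lexx ler01 lerp_seg_pt mul0r addr0.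
    by split => //; congr seg_pt; case: hb => -[]; lra.
  case: (eqVneq t a) => [->|hta].
    by exists 0; rewrite lexx ler01 lerp_seg_pt mul0r addr0.
  case: (eqVneq t b) => [->|htb].
    by exists 1; rewrite lexx ler01 lerp_seg_pt mul1r; split => //; congr seg_pt; ring.
  have [|u [/andP [u0 u1] ->]] := @sbetw_ratio a b t.
    by rewrite /betw /sbetw in hb *; move: hta htb => /eqP hta /eqP htb; lra.
  by exists u; rewrite (ltW u0) (ltW u1) lerp_seg_pt.
Qed.

Lemma on_seg_pt i t : 0 <= t <= 1 -> on_seg (s i) (seg_pt i t).
Proof. by move=> h; exists t. Qed.

Lemma on_seg_pt_param i t : on_seg (s i) (seg_pt i t) -> 0 <= t <= 1.
Proof. by move=> [u [hu /(f_equal (@proj R)) /proj_seg_pt_inj ->]]. Qed.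

Lemma on_pseg_pt i t : 0 <= t <= 1 -> on_pseg (s i) (proj (seg_pt i t)).
Proof. by move=> h; exists t. Qed.

Lemma on_seg_proj i p : on_seg (s i) p -> on_pseg (s i) (proj p).
Proof. by move=> [t [ht ->]]; exists t. Qed.

Lemma on_seg_proj_inj i p p' :
  on_seg (s i) p -> on_seg (s i) p' -> proj p = proj p' -> p = p'.
Proof. by move=> [t [_ ->]] [t' [_ ->]] /proj_seg_pt_inj ->. Qed.

Lemma on_seg_unique i j p : on_seg (s i) p -> on_seg (s j) p -> i = j.
Proof.
move=> h1 h2; case: (eqVneq i j) => // /eqP hij; exfalso.
by case: gp => hd _; apply: (hd i j hij p h1 h2).
Qed.

Lemma pseg_meet_unique i j q q' : i <> j -> on_pseg (s i) q -> on_pseg (s j) q ->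
  on_pseg (s i) q' -> on_pseg (s j) q' -> q = q'.
Proof. by case: gp => _ [h _] hij; exact: (h i j hij q q'). Qed.

Lemma crossing_param_unique i j t t' : j <> i -> 0 <= t <= 1 -> 0 <= t' <= 1 ->
  on_pseg (s j) (proj (seg_pt i t)) -> on_pseg (s j) (proj (seg_pt i t')) -> t = t'.
Proof.
move=> hji ht ht' h1 h2; apply: proj_seg_pt_inj.
exact: (pseg_meet_unique hji h1 (on_pseg_pt _ ht) h2 (on_pseg_pt _ ht')).
Qed.

(* > is antisymmetric between distinct segments: they cross at most once *)
Lemma above_segs_asym i j : i <> j -> above (on_seg (s i)) (on_seg (s j)) ->
  ~ above (on_seg (s j)) (on_seg (s i)).
Proof.
move=> hij [p [p' [hp [hp' [e lt1]]]]] [r [r' [hr [hr' [e' lt2]]]]].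
have eq : proj p = proj r.
  apply: (pseg_meet_unique hij (on_seg_proj hp)); first by rewrite e; exact: on_seg_proj.
    by rewrite e'; exact: on_seg_proj.
  exact: on_seg_proj.
have e1 : p = r' by apply: (on_seg_proj_inj hp hr'); rewrite eq e'.
have e2 : p' = r by apply: (on_seg_proj_inj hp' hr); rewrite -eq e.
by move: lt1 lt2; rewrite e1 e2 => lt1 /(lt_trans lt1); rewrite ltxx.
Qed.

Lemma gedge_no_vertex_between i a b c :
  gedge s (i, proj (seg_pt i a)) (i, proj (seg_pt i b)) ->
  is_vertex s (i, proj (seg_pt i c)) -> ~ sbetw a b c.
Proof.
move=> [_ [_ [_ [_ h]]]] hv hb; apply: (h _ hv).
by have [u [hu ->]] := sbetw_ratio hb; exists u; rewrite /= lerp2_seg_pt.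
Qed.

Lemma gedgeI i a b : a != b ->
  is_vertex s (i, proj (seg_pt i a)) -> is_vertex s (i, proj (seg_pt i b)) ->
  (forall c, sbetw a b c -> ~ is_vertex s (i, proj (seg_pt i c))) ->
  gedge s (i, proj (seg_pt i a)) (i, proj (seg_pt i b)).
Proof.
move=> hab ha hb h; do 4![split => //].
  by move=> /= /proj_seg_pt_inj /eqP; rewrite (negbTE hab).
move=> q hq [u [hu]]; rewrite /= lerp2_seg_pt => e.
by apply: (h _ (ratio_sbetw hab hu)); rewrite -e.
Qed.

Lemma gedge_vertexl v w : gedge s v w -> is_vertex s v.
Proof. by case=> _ [h _]. Qed.

Lemma gedge_vertexr v w : gedge s v w -> is_vertex s w.
Proof. by case=> _ [_ [h _]]. Qed.

End Parametrisation.

Section Pieces.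
Variables (R : realType) (I : finType) (s : I -> seg R).
Hypothesis nv : forall i, nonvertical (s i).
Hypothesis gp : general_position s.
Variable Q : pt R -> Prop.

Local Notation seg_pt := (seg_pt s).
Local Notation piece := (piece s Q).

Lemma piece_on i x y : piece i x y -> on_seg (s i) y.
Proof. by case. Qed.

Lemma piece_uncut i x y : piece i x y -> ~ Q y.
Proof.
move=> [_ h]; apply: h; exists 1; rewrite ler01 lexx; split => //.
by rewrite /lerp; case: x; case: y => ? ? ? ? ? ? /=; congr Pt; ring.
Qed.

Lemma piece_self i x : on_seg (s i) x -> ~ Q x -> piece i x x.
Proof.
move=> hx hq; split => // z [u [_ ->]].
suff -> : lerp x x u = x by [].
by rewrite /lerp; case: x {hx hq} => ? ? ? /=; congr Pt; ring.
Qed.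

Lemma pieceP i tx a : piece i (seg_pt i tx) (seg_pt i a) <->
  0 <= a <= 1 /\ forall t, betw tx a t -> ~ Q (seg_pt i t).
Proof.
split.
- move=> [ho h]; split; first exact: on_seg_pt_param ho.
  by move=> t ht; apply: h; apply/closed_betweenP; exists t.
- move=> [ha h]; split; first exact: on_seg_pt.
  by move=> z /closed_betweenP [t [ht ->]]; apply: h.
Qed.

Lemma piece_betw i tx a b c : piece i (seg_pt i tx) (seg_pt i a) ->
  piece i (seg_pt i tx) (seg_pt i b) -> betw a b c -> piece i (seg_pt i tx) (seg_pt i c).
Proof.
move=> /pieceP [ha h1] /pieceP [hb h2] hc; apply/pieceP; split.
  by move: ha hb => /andP [? ?] /andP [? ?]; apply/andP; case: hc; lra.
move=> t ht; have : betw tx a t \/ betw tx b t by rewrite /betw in ht hc *; lra.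
by case=> [/h1|/h2].
Qed.

Lemma piece_eq i x y : on_seg (s i) x -> piece i x y -> piece i x = piece i y.
Proof.
move=> [tx [_ ->]] hy; have [ty [_ ey]] := piece_on hy; subst y.
apply: funext => z; apply: propext.
split=> hz; have [tz [htz ez]] := piece_on hz; subst z;
  move: hy hz => /pieceP [_ h1] /pieceP [_ h2]; apply/pieceP; split => // t ht.
- have : betw tx ty t \/ betw tx tz t by rewrite /betw in ht *; lra.
  by case=> [/h1|/h2].
- have : betw tx ty t \/ betw ty tz t by rewrite /betw in ht *; lra.
  by case=> [/h1|/h2].
Qed.

Lemma piece_segment A i j y z : pieces s Q A -> A y -> A z ->
  on_seg (s i) y -> on_seg (s j) z -> i = j.
Proof.
move=> [i' [x [_ [_ ->]]]] hy hz hiy hjz.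
by rewrite -(on_seg_unique gp (piece_on hy) hiy) (on_seg_unique gp (piece_on hz) hjz).
Qed.

End Pieces.

Section ClosedSequences.
Variables (T : Type) (v : nat -> T) (m a b : nat).
Hypotheses (hab : (a < b)%N) (hbm : (b <= m)%N).
Hypotheses (hvab : v a = v b) (hvm : v m = v 0%N).

(* the closed sequence v_0 ... v_m = v_0 with the loop v_a ... v_b = v_a cut
   out; it has length m - (b - a) and its steps are the steps of v outside
   [a, b) *)
Definition splice (j : nat) : T := if (j <= a)%N then v j else v (j + (b - a))%N.

Lemma splice_closed : splice (m - (b - a)) = splice 0.
Proof.
rewrite /splice leq0n; case: ifP => h.
  have ema : (m - (b - a))%N = a by lia.
  have ebm : b = m by lia.
  by rewrite ema hvab ebm.
by rewrite (_ : (m - (b - a) + (b - a))%N = m) //; lia.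
Qed.

Lemma splice_step j : (j < m - (b - a))%N -> exists j',
  [/\ (j' < m)%N, ~~ ((a <= j') && (j' < b))%N, splice j = v j' & splice j.+1 = v j'.+1].
Proof.
move=> hj; rewrite /splice; case: (ltngtP j a) => hja.
- by exists j; split => //; lia.
- by exists (j + (b - a))%N; rewrite addSn; split => //; lia.
- subst j; exists b; have -> : (a.+1 + (b - a))%N = b.+1 by lia.
  by rewrite hvab; split => //; lia.
Qed.

Lemma splice_keep j' : (j' < m)%N -> ~~ ((a <= j') && (j' < b))%N -> exists j,
  [/\ (j < m - (b - a))%N, splice j = v j' & splice j.+1 = v j'.+1].
Proof.
move=> hj' hout; rewrite /splice; case: (ltnP j' a) => hja.
  by exists j'; rewrite (ltnW hja) hja; split => //; lia.
case: (ltngtP j' b) => hjb; first by move: hout; rewrite hja hjb.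
- exists (j' - (b - a))%N; rewrite !ifN; try lia.
  have -> : (j' - (b - a) + (b - a))%N = j' by lia.
  have -> : ((j' - (b - a)).+1 + (b - a))%N = j'.+1 by lia.
  by split => //; lia.
- subst j'; exists a; rewrite leqnn ltnn hvab.
  have -> : (a.+1 + (b - a))%N = b.+1 by lia.
  by split => //; lia.
Qed.

End ClosedSequences.

(* a closed sequence of pieces in which each step is an equality or a >, with
   at least one >, contains a depth cycle: splice out the equality steps *)
Lemma depth_cycle_of_chain (R : realType) (F : (pt R -> Prop) -> Prop) m
    (f : nat -> pt R -> Prop) :
  f m = f 0%N -> (forall j, (j <= m)%N -> F (f j)) ->
  (forall j, (j < m)%N -> f j = f j.+1 \/ above (f j) (f j.+1)) ->
  (exists j, (j < m)%N /\ above (f j) (f j.+1)) -> has_depth_cycle F.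
Proof.
elim: m f => [|m IH] f hm hF hs [j0 [hj0 ha0]] //.
have [[j [hj hna]]|hall] :=
  pselect (exists j, (j < m.+1)%N /\ ~ above (f j) (f j.+1)); last first.
  exists m.+1, f; do 3![split => //]; move=> j hj.
  by apply: contrapT => hna; apply: hall; exists j.
have ej : f j = f j.+1 by case: (hs j hj).
have hjj : (j < j.+1)%N by [].
have hlen : (m.+1 - (j.+1 - j))%N = m by lia.
have hcl := splice_closed hjj hj ej hm; rewrite hlen in hcl.
have hst := splice_step hjj hj ej; rewrite hlen in hst.
have hkeep := splice_keep hjj hj ej; rewrite hlen in hkeep.
set g := splice f j j.+1 in hcl hst hkeep.
have hgF : forall i, (i <= m)%N -> F (g i).
  move=> i hi; case: (ltnP i m) => him.
    by have [j' [? _ -> _]] := hst i him; apply: hF; lia.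
  have -> : i = m by lia.
  by rewrite hcl /g /splice leq0n; apply: hF.
have hgs : forall i, (i < m)%N -> g i = g i.+1 \/ above (g i) (g i.+1).
  by move=> i /hst [j' [hj' _ -> ->]]; apply: hs.
apply: (IH g hcl hgF hgs).
have hj0j : j0 <> j by move=> e; apply: hna; rewrite -e.
have [|i [hi e1 e2]] := hkeep j0 hj0; first by apply/negP; lia.
by exists i; rewrite e1 e2.
Qed.

Section Walks.
Variables (R : realType) (I : finType) (s : I -> seg R).
Hypothesis nv : forall i, nonvertical (s i).
Hypothesis gp : general_position s.
Variable W : vtx R I -> Prop.

Definition step (v w : vtx R I) : Prop := gedge s v w \/ garc s v w.

Lemma step_vertex v w : step v w -> is_vertex s v.
Proof. by case=> [[_ [h _]]|[_ [_ [h _]]]]. Qed.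

(* an arc can not be walked back: its segments are distinct and > is
   antisymmetric between them *)
Lemma arc_not_back v w : garc s v w -> ~ step w v.
Proof.
move=> [hne [_ [_ [_ hab]]]] [[e _]|[_ [_ [_ [_ hba]]]]]; first exact: hne (esym e).
exact: (above_segs_asym nv gp hne hab hba).
Qed.

Inductive walk : vtx R I -> vtx R I -> bool -> Prop :=
| walk_nil x : W x -> walk x x false
| walk_cons x y z b :
    W x -> step x y -> walk y z b -> walk x z (b || `[< garc s x y >]).

Lemma walk_cat x y z b1 b2 : walk x y b1 -> walk y z b2 -> walk x z (b1 || b2).
Proof.
elim=> [//|x0 y0 z0 b hw hst _ IH] h.
by have := walk_cons hw hst (IH h); rewrite orbAC.
Qed.

Lemma walk_arc x y : W x -> W y -> garc s x y -> walk x y true.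
Proof.
move=> hx hy ha; have := walk_cons hx (or_intror ha) (walk_nil hy).
by rewrite orFb (asboolT ha).
Qed.

Definition closed_walk (m : nat) (v : nat -> vtx R I) : Prop :=
  v m = v 0%N /\ forall j, (j < m)%N -> step (v j) (v j.+1) /\ W (v j).

Definition uses_arc (m : nat) (v : nat -> vtx R I) : Prop :=
  exists j, (j < m)%N /\ garc s (v j) (v j.+1).

Lemma walk_seq x z b : walk x z b -> exists m (v : nat -> vtx R I),
  [/\ v 0%N = x, v m = z, forall j, (j < m)%N -> step (v j) (v j.+1) /\ W (v j)
    & b -> uses_arc m v].
Proof.
elim=> [x0 hw | x0 y0 z0 b0 hw hst _ [m [v [h0 hm hs ha]]]].
  by exists 0%N, (fun _ => x0).
exists m.+1, (fun j => if j is j'.+1 then v j' else x0); split => //.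
  by case=> [_|j hj] /=; [rewrite h0|exact: hs].
move=> /orP [/ha [j [hj hg]]|/asboolP hg]; first by exists j.+1.
by exists 0%N; rewrite /= h0.
Qed.

Lemma simple_closed_walk_cycle m v : closed_walk m v -> uses_arc m v ->
  (forall j j', (j < m)%N -> (j' < m)%N -> v j = v j' -> j = j') -> has_cycle_in s W.
Proof.
move=> [hm hs] [j0 [hj0 ha0]] hdist.
(* with m = 1 or m = 2 the arc would be walked back *)
have hm3 : (3 <= m)%N.
  case: (ltnP 2 m) => // h; exfalso.
  have [em|em] : m = 1%N \/ m = 2%N by lia.
    have ej : j0 = 0%N by lia.
    by subst m j0; move: ha0; rewrite hm => -[].
  subst m; move: ha0; have [->|->] : j0 = 0%N \/ j0 = 1%N by lia.
    by move=> /arc_not_back; apply; rewrite -hm; case: (hs 1%N isT).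
  by move=> /arc_not_back; apply; rewrite hm; case: (hs 0%N isT).
exists m, v, (fun j => `[< gedge s (v j) (v j.+1) >]).
split; first exact: ltnW hm3.
split => //; split.
  by move=> j /hs [hst hw]; split => //; exact: step_vertex hst.
split => //; split=> [j hj|j j' hjj' hj' _ _ [[e1 e2]|[e1 e2]]].
- case: asboolP => // hng.
  by have [[h|h] _] := hs j hj.
- by have := hdist _ _ (ltn_trans hjj' hj') hj' e1; lia.
- case: (ltnP j'.+1 m) => h; first by have := hdist _ _ (ltn_trans hjj' hj') h e1; lia.
  have ej' : j'.+1 = m by lia.
  rewrite ej' hm in e1; have ej := hdist _ _ (ltn_trans hjj' hj') (ltnW (ltnW hm3)) e1.
  by subst j; have := hdist _ _ (ltnW hm3) hj' e2; lia.
Qed.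

(* every closed walk using an arc contains a cycle: shortcut it at a repeated
   vertex, keeping the part that contains an arc *)
Lemma closed_walk_cycle m v : closed_walk m v -> uses_arc m v -> has_cycle_in s W.
Proof.
have [N] := ubnP m; elim: N m v => [//|N IH] m v hmN [hm hs] [j0 [hj0 ha0]].
have [[a [b [hab hbm eab]]]|hd] :=
  pselect (exists a b, [/\ (a < b)%N, (b < m)%N & v a = v b]); last first.
  apply: (simple_closed_walk_cycle (conj hm hs)); first by exists j0.
  move=> j j' hj hj' e; case: (ltngtP j j') => // h; exfalso; apply: hd.
    by exists j, j'.
  by exists j', j.
have [[h1 h2]|hout] := pselect ((a <= j0)%N /\ (j0 < b)%N).
  apply: (IH (b - a)%N (fun j => v (a + j)%N)); first lia.
  - split; first by rewrite addn0 subnKC // ltnW.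
    by move=> j hj; rewrite addnS; apply: hs; lia.
  - exists (j0 - a)%N; split; first lia.
    by rewrite addnS subnKC.
have hbm' := ltnW hbm.
apply: (IH (m - (b - a))%N (splice v a b)); first lia.
- split; first exact: splice_closed.
  move=> j /(splice_step hab hbm' eab) [j' [hj' _ -> ->]]; exact: hs.
- have [|j [hj e1 e2]] := splice_keep hab hbm' eab hj0.
    by apply/negP => /andP [? ?]; apply: hout.
  by exists j; rewrite e1 e2.
Qed.

End Walks.

Section VertexParameter.
Variables (R : realType) (I : finType) (s : I -> seg R).

Definition vparam (v : vtx R I) : R :=
  match pselect (exists t, 0 <= t <= 1 /\ v.2 = proj (seg_pt s v.1 t)) with
  | left H => proj1_sig (cid H)
  | right _ => 0
  end.

Definition vertex_pt (v : vtx R I) : pt R := seg_pt s v.1 (vparam v).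

Lemma vparamP v : is_vertex s v -> 0 <= vparam v <= 1 /\ v.2 = proj (vertex_pt v).
Proof.
move=> [j [_ [hp _]]]; rewrite /vertex_pt /vparam; case: pselect => [H|hn].
  exact: (proj2_sig (cid H)).
by exfalso; apply: hn.
Qed.

Lemma vertex_ptE v : is_vertex s v -> v = (v.1, proj (seg_pt s v.1 (vparam v))).
Proof. by move=> /vparamP [_ e]; rewrite -e; case: v {e}. Qed.

End VertexParameter.

Section FeedbackVertexSetToCuts.
Variables (R : realType) (I : finType) (s : I -> seg R).
Hypothesis nv : forall i, nonvertical (s i).
Hypothesis gp : general_position s.
Variable U : seq (vtx R I).
Hypothesis hU : forall v, List.In v U -> is_vertex s v.

Local Notation seg_pt := (seg_pt s).

Definition cut_set : pt R -> Prop := fun p => List.In p (map (vertex_pt s) U).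
Definition kept : vtx R I -> Prop := fun v => ~ List.In v U.

Local Notation piece := (piece s cut_set).
Local Notation pieces := (pieces s cut_set).
Local Notation walk := (walk s kept).

Lemma uncut_kept i t : ~ cut_set (seg_pt i t) -> kept (i, proj (seg_pt i t)).
Proof.
move=> hq hin; apply: hq; have [ht e] := vparamP (hU hin).
have -> : seg_pt i t = vertex_pt s (i, proj (seg_pt i t)).
  by rewrite /vertex_pt /= -(proj_seg_pt_inj nv e).
exact: List.in_map.
Qed.

Lemma piece_kept A i p : pieces A -> A p -> on_seg (s i) p -> kept (i, proj p).
Proof.
move=> [i' [x [_ [_ ->]]]] hp [t [_ ep]]; subst p.
exact: uncut_kept (piece_uncut hp).
Qed.

Definition crossing (i : I) (a b : R) (j : I) : Prop :=
  j <> i /\ exists t, sbetw a b t /\ on_pseg (s j) (proj (seg_pt i t)).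

Definition crossings (i : I) (a b : R) : {set I} := [set j | `[< crossing i a b j >]].

(* splitting [a, b] at a crossing of s_j strictly decreases the number of
   crossings on both sides, since s_j crosses s_i only once *)
Lemma crossings_split i a b t j : 0 <= a <= 1 -> 0 <= b <= 1 -> j <> i ->
  sbetw a b t -> on_pseg (s j) (proj (seg_pt i t)) ->
  (#|crossings i a t| < #|crossings i a b|)%N /\ (#|crossings i t b| < #|crossings i a b|)%N.
Proof.
move=> /andP [a0 a1] /andP [b0 b1] hji hst hpj.
have ht : 0 <= t <= 1 by apply/andP; case: hst; lra.
have sub a' b' : (forall u, sbetw a' b' u -> sbetw a b u) -> ~ sbetw a' b' t ->
    (#|crossings i a' b'| < #|crossings i a b|)%N.
  move=> hsub hnt; apply: proper_card; apply/properP; split.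
    apply/subsetP => j'; rewrite !inE => /asboolP [hj' [t' [hs' hp']]].
    by apply/asboolP; split => //; exists t'; split => //; apply: hsub.
  exists j; rewrite !inE; first by apply/asboolP; split => //; exists t.
  apply/asboolP => -[_ [t' [hs' hp']]]; apply: hnt.
  have ht' : 0 <= t' <= 1 by apply/andP; case: (hsub _ hs'); lra.
  by rewrite (crossing_param_unique nv gp hji ht ht' hpj hp').
rewrite /sbetw in hst; split; apply: sub; rewrite /sbetw.
- by move=> u; lra.
- by lra.
- by move=> u; lra.
- by lra.
Qed.

(* two vertices lying on one piece are joined by a walk avoiding U:
   induction on the number of crossings between them *)
Lemma piece_walk i tx N a b : (#|crossings i a b| < N)%N ->
  piece i (seg_pt i tx) (seg_pt i a) -> piece i (seg_pt i tx) (seg_pt i b) ->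
  is_vertex s (i, proj (seg_pt i a)) -> is_vertex s (i, proj (seg_pt i b)) ->
  exists f, walk (i, proj (seg_pt i a)) (i, proj (seg_pt i b)) f.
Proof.
elim: N a b => [//|N IH] a b hN ha hb hva hvb.
have [ha01 _] := (pieceP nv _ _ _ _).1 ha; have /andP [a0 a1] := ha01.
have [hb01 _] := (pieceP nv _ _ _ _).1 hb; have /andP [b0 b1] := hb01.
have [[j [hji [t [hst hpj]]]]|hno] := pselect (exists j, crossing i a b j).
  have ht : 0 <= t <= 1 by apply/andP; case: hst; lra.
  have hvt : is_vertex s (i, proj (seg_pt i t)).
    by exists j; split => //=; split => //; exact: on_pseg_pt.
  have hpt : piece i (seg_pt i tx) (seg_pt i t).
    by apply: (piece_betw nv ha hb); rewrite /betw; case: hst; lra.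
  have [lt1 lt2] := crossings_split ha01 hb01 hji hst hpj.
  have [f1 w1] := IH a t (leq_trans lt1 hN) ha hpt hva hvt.
  have [f2 w2] := IH t b (leq_trans lt2 hN) hpt hb hvt hvb.
  by exists (f1 || f2); exact: walk_cat w1 w2.
have hka := uncut_kept (piece_uncut ha); have hkb := uncut_kept (piece_uncut hb).
have [eab|hab] := eqVneq a b; first by subst b; exists false; constructor.
exists (false || `[< garc s (i, proj (seg_pt i a)) (i, proj (seg_pt i b)) >]).
apply: walk_cons => //; last by constructor.
left; apply: gedgeI => // c hc [j [hji [_ hpj]]].
by apply: hno; exists j; split => //; exists c.
Qed.

Lemma piece_walk_points A i y z : pieces A -> A y -> A z -> on_seg (s i) y ->
  is_vertex s (i, proj y) -> is_vertex s (i, proj z) ->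
  exists f, walk (i, proj y) (i, proj z) f.
Proof.
move=> [i' [x [[tx [_ ex]] [_ eA]]]]; subst A x => hy hz hiy hvy hvz.
have ei := on_seg_unique gp (piece_on hy) hiy; subst i'.
have [a [_ ey]] := piece_on hy; have [b [_ ez]] := piece_on hz; subst y z.
exact: (@piece_walk i tx #|crossings i a b|.+1).
Qed.

Lemma arc_of_above A B : pieces A -> pieces B -> above A B ->
  exists i p i' p', [/\ A p, on_seg (s i) p, B p', on_seg (s i') p' &
    [/\ is_vertex s (i, proj p), kept (i, proj p), garc s (i, proj p) (i', proj p')
      & kept (i', proj p')]].
Proof.
move=> pA pB [p [p' [hp [hp' [e lt]]]]].
have [i [x [_ [_ eA]]]] := pA; have [i' [x' [_ [_ eB]]]] := pB.
have hip : on_seg (s i) p by rewrite eA in hp; exact: piece_on hp.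
have hip' : on_seg (s i') p' by rewrite eB in hp'; exact: piece_on hp'.
have hii : i <> i'.
  by move=> ei; subst i'; move: lt; rewrite (on_seg_proj_inj nv hip hip' e) ltxx.
have hv : is_vertex s (i, proj p).
  exists i'; split; first by move=> /= e'; apply: hii; rewrite e'.
  by split; [exact: on_seg_proj hip|rewrite /= e; exact: on_seg_proj hip'].
have hv' : is_vertex s (i', proj p').
  exists i; split; first by move=> /= e'; apply: hii; rewrite e'.
  by split; [exact: on_seg_proj hip'|rewrite /= -e; exact: on_seg_proj hip].
exists i, p, i', p'; split => //; split => //.
- exact: piece_kept pA hp hip.
- by do 4![split => //]; exists p, p'.
- exact: piece_kept pB hp' hip'.
Qed.

(* following a chain of pieces P_0 > P_1 > ... > P_n from a vertex of P_0,
   each > contributes an arc and each piece a walk inside it *)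
Lemma walk_along_chain n (Pc : nat -> pt R -> Prop) i0 p0 :
  (forall j, (j <= n)%N -> pieces (Pc j)) ->
  (forall j, (j < n)%N -> above (Pc j) (Pc j.+1)) ->
  Pc 0%N p0 -> on_seg (s i0) p0 -> is_vertex s (i0, proj p0) ->
  forall j, (j <= n)%N -> exists i y, [/\ Pc j y, on_seg (s i) y,
    is_vertex s (i, proj y) & walk (i0, proj p0) (i, proj y) (0 < j)%N].
Proof.
move=> hF ha h0 hi0 hv0; elim=> [_|j IH hjn].
  by exists i0, p0; split => //; constructor; exact: piece_kept (hF 0%N isT) h0 hi0.
have [i [y [hy hiy hvy hw]]] := IH (ltnW hjn).
have [i2 [p [i3 [p' [hp hi2 hp' hi3 [hv2 hk2 harc hk3]]]]]] :=
  arc_of_above (hF j (ltnW hjn)) (hF j.+1 hjn) (ha j hjn).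
have ei : i2 = i := piece_segment gp (hF j (ltnW hjn)) hp hy hi2 hiy; subst i2.
have [f wp] := piece_walk_points (hF j (ltnW hjn)) hy hp hiy hvy hv2.
exists i3, p'; split => //; first by case: harc => _ [_ [_ [h _]]].
by have := walk_cat hw (walk_cat wp (walk_arc hk2 hk3 harc)); rewrite !orbT.
Qed.

Lemma no_depth_cycle : ~ has_cycle_in s kept -> ~ has_depth_cycle pieces.
Proof.
move=> hnc [n [Pc [hn [hF [ha hPn]]]]].
have [i0 [p0 [_ [_ [h0 hi0 _ _ [hv0 _ _ _]]]]]] :=
  arc_of_above (hF 0%N isT) (hF 1%N hn) (ha 0%N hn).
have [i [y [hy hiy hvy hw]]] := walk_along_chain hF ha h0 hi0 hv0 (leqnn n).
have hy0 : Pc 0%N y by rewrite -hPn.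
have ei : i0 = i := piece_segment gp (hF 0%N isT) h0 hy0 hi0 hiy; subst i0.
have [f wb] := piece_walk_points (hF 0%N isT) hy0 h0 hiy hvy hv0.
have := walk_cat hw wb; rewrite hn /= => /walk_seq [m [v [ev0 evm hs harc]]].
apply: hnc; apply: (closed_walk_cycle nv gp (m := m) (v := v)); last exact: harc.
by split; [rewrite ev0 evm|].
Qed.

End FeedbackVertexSetToCuts.

Lemma fvs_eliminable (R : realType) (I : finType) (s : I -> seg R) (k : nat) :
  (forall i : I, nonvertical (s i)) -> general_position s ->
  has_fvs_of_size s k -> eliminable_with s k.
Proof.
move=> nv gp [U [hk [hU hnc]]].
exists (map (vertex_pt s) U); split; first by rewrite size_map.
split; last exact: (no_depth_cycle nv gp hU hnc).
move=> q /List.in_map_iff [v [<- hv]].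
by exists v.1; have [ht _] := vparamP (hU _ hv); exists (vparam s v).
Qed.

Section CutsToFeedbackVertexSet.
Variables (R : realType) (I : finType) (s : I -> seg R).
Hypothesis nv : forall i, nonvertical (s i).
Hypothesis gp : general_position s.

Local Notation seg_pt := (seg_pt s).

Definition covers (U : seq (vtx R I)) (q : pt R) : Prop :=
  forall i, on_seg (s i) q ->
  (is_vertex s (i, proj q) -> List.In (i, proj q) U) /\
  (forall a b t, gedge s (i, proj (seg_pt i a)) (i, proj (seg_pt i b)) -> sbetw a b t ->
     q = seg_pt i t -> List.In (i, proj (seg_pt i a)) U \/ List.In (i, proj (seg_pt i b)) U).

Lemma covers_mono U U' q : covers U q -> (forall v, List.In v U -> List.In v U') ->
  covers U' q.
Proof.
move=> hc hsub i hi; have [h1 h2] := hc i hi; split; first by move=> /h1 /hsub.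
by move=> a b t hge hb e; case: (h2 a b t hge hb e) => /hsub; [left|right].
Qed.

(* a single cut point is covered by at most one vertex: the vertex below it,
   or an end of the unique edge below it *)
Lemma cover_cut_point q : (exists i, on_seg (s i) q) -> exists Uq : seq (vtx R I),
  [/\ (size Uq <= 1)%N, forall v, List.In v Uq -> is_vertex s v & covers Uq q].
Proof.
move=> [i [tq [htq eq]]]; subst q.
have hseg i' : on_seg (s i') (seg_pt i tq) -> i' = i.
  by move=> h; apply: (on_seg_unique gp h); exact: on_seg_pt.
have ht t : seg_pt i tq = seg_pt i t -> t = tq.
  by move=> e; apply: (proj_seg_pt_inj nv (i := i)); rewrite e.
have [hA|hnA] := pselect (is_vertex s (i, proj (seg_pt i tq))).
  exists [:: (i, proj (seg_pt i tq))]; split => //; first by move=> v [<-|[]].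
  move=> i' /hseg ->; split; first by left.
  by move=> a b t hge hb /ht e; subst t; exfalso; exact: gedge_no_vertex_between hge hA hb.
have [[a [b [hge hb]]]|hnB] := pselect (exists a b,
  gedge s (i, proj (seg_pt i a)) (i, proj (seg_pt i b)) /\ sbetw a b tq); last first.
  exists [::]; split => // i' /hseg ->; split => // a b t hge hb /ht e; subst t.
  by exfalso; apply: hnB; exists a, b.
exists [:: (i, proj (seg_pt i a))]; split => //.
  by move=> v [<-|[]]; exact: gedge_vertexl hge.
move=> i' /hseg ->; split => // a' b' t hge' hb' /ht e; subst t.
have n1 := gedge_no_vertex_between hge (gedge_vertexl hge').
have n2 := gedge_no_vertex_between hge (gedge_vertexr hge').
have n3 := gedge_no_vertex_between hge' (gedge_vertexl hge).
have n4 := gedge_no_vertex_between hge' (gedge_vertexr hge).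
have : a' = a \/ b' = a by rewrite /sbetw in n1 n2 n3 n4 hb hb' *; lra.
by case=> ->; [left|right]; left.
Qed.

Lemma cover_cut_points (Q : seq (pt R)) :
  (forall q, List.In q Q -> exists i, on_seg (s i) q) ->
  exists U, [/\ (size U <= size Q)%N, forall v, List.In v U -> is_vertex s v
    & forall q, List.In q Q -> covers U q].
Proof.
elim: Q => [_|q Q IH hQ]; first by exists [::].
have [U [hs hv hc]] := IH (fun q' h => hQ q' (or_intror h)).
have [Uq [hs' hv' hc']] := cover_cut_point (hQ q (or_introl erefl)).
exists (Uq ++ U); split.
- by rewrite size_cat /=; lia.
- by move=> v /List.in_app_iff [/hv'|/hv].
- move=> q' [<-|hq'].
    by apply: covers_mono hc' _ => v hv0; apply/List.in_app_iff; left.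
  by apply: covers_mono (hc _ hq') _ => v hv0; apply/List.in_app_iff; right.
Qed.

(* two undirected edges meeting at the point with the larger parameter come
   from the same vertex: otherwise one end would lie inside the other edge *)
Lemma gedge_peak i a b c :
  gedge s (i, proj (seg_pt i a)) (i, proj (seg_pt i c)) ->
  gedge s (i, proj (seg_pt i c)) (i, proj (seg_pt i b)) -> a < c -> b < c -> a = b.
Proof.
move=> g1 g2 hac hbc; case: (ltgtP a b) => // h; exfalso.
- by apply: (gedge_no_vertex_between g1 (gedge_vertexr g2)); rewrite /sbetw; lra.
- by apply: (gedge_no_vertex_between g2 (gedge_vertexl g1)); rewrite /sbetw; lra.
Qed.

End CutsToFeedbackVertexSet.

Lemma max_index (d : Order.disp_t) (T : orderType d) (f : nat -> T) m : (0 < m)%N ->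
  exists jm, (jm < m)%N /\ forall j, (j < m)%N -> (f j <= f jm)%O.
Proof.
elim: m => [//|m IH] _; case: (posnP m) => hm.
  by subst m; exists 0%N; split => // j; rewrite ltnS leqn0 => /eqP ->.
have [jm [hjm hmax]] := IH hm.
case: (leP (f m) (f jm)) => h.
- exists jm; split; first lia.
  by move=> j; rewrite ltnS leq_eqVlt => /orP [/eqP ->|/hmax].
- exists m; split => // j; rewrite ltnS leq_eqVlt => /orP [/eqP ->|/hmax h'] //.
  exact: le_trans h' (ltW h).
Qed.

Section CycleToDepthCycle.
Variables (R : realType) (I : finType) (s : I -> seg R).
Hypothesis nv : forall i, nonvertical (s i).
Hypothesis gp : general_position s.

Local Notation seg_pt := (seg_pt s).

(* the undirected edges of G_S on one segment form a path, so no cycle of G_S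
   uses undirected edges only: at the vertex of largest parameter both
   neighbours coincide, which forces a cycle of length 2 using one edge twice *)
Lemma no_edge_only_cycle m (v : nat -> vtx R I) :
  (2 <= m)%N -> v m = v 0%N ->
  (forall j j', (j < m)%N -> (j' < m)%N -> v j = v j' -> j = j') ->
  (forall j, (j < m)%N -> gedge s (v j) (v j.+1)) ->
  (forall j j', (j < j')%N -> (j' < m)%N -> ~ same_upair (v j) (v j.+1) (v j') (v j'.+1)) ->
  False.
Proof.
move=> hm2 hm hd hg hnr; set i := (v 0%N).1.
have hi j : (j <= m)%N -> (v j).1 = i.
  by elim: j => [//|j IH] hj; case: (hg j hj) => e _; rewrite -e; apply: IH; lia.
have hvx j : (j <= m)%N -> is_vertex s (v j).
  move=> hj; case: (ltnP j m) => h; first exact: gedge_vertexl (hg j h).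
  have -> : j = m by lia.
  by rewrite hm; exact: gedge_vertexl (hg 0%N (ltnW hm2)).
pose t j := vparam s (v j).
have ev j : (j <= m)%N -> v j = (i, proj (seg_pt i (t j))).
  by move=> hj; rewrite {1}(vertex_ptE (hvx j hj)) /t hi.
have [jm [hjm hmax]] := max_index t (ltnW hm2).
have hmax' j : (j <= m)%N -> t j <= t jm.
  move=> hj; case: (ltnP j m) => h; first exact: hmax.
  have -> : j = m by lia.
  by rewrite /t hm; apply: hmax; lia.
pose pr := if jm == 0%N then m.-1 else jm.-1.
have hpr : (pr < m)%N by rewrite /pr; case: eqP => _; lia.
have hprs : v pr.+1 = v jm.
  rewrite /pr; case: eqP => e; first by rewrite e (_ : m.-1.+1 = m) //; lia.
  by rewrite (_ : jm.-1.+1 = jm) //; lia.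
have g1 : gedge s (i, proj (seg_pt i (t pr))) (i, proj (seg_pt i (t jm))).
  by rewrite -(ev pr (ltnW hpr)) -(ev jm (ltnW hjm)) -hprs; apply: hg.
have g2 : gedge s (i, proj (seg_pt i (t jm))) (i, proj (seg_pt i (t jm.+1))).
  by rewrite -(ev jm (ltnW hjm)) -(ev jm.+1 hjm); apply: hg.
have l1 : t pr < t jm.
  rewrite lt_neqAle hmax' ?andbT; last lia.
  by apply/eqP => e; case: g1 => _ [_ [_ [/= h _]]]; apply: h; rewrite e.
have l2 : t jm.+1 < t jm.
  rewrite lt_neqAle hmax' ?andbT //.
  by apply/eqP => e; case: g2 => _ [_ [_ [/= h _]]]; apply: h; rewrite e.
have evv : v pr = v jm.+1.
  by rewrite (ev pr (ltnW hpr)) (ev jm.+1 hjm) (gedge_peak g1 g2 l1 l2).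
(* so the neighbours of jm coincide, which forces m = 2 *)
pose sc := if jm.+1 == m then 0%N else jm.+1.
have hsc : (sc < m)%N by rewrite /sc; case: eqP => e; lia.
have evs : v sc = v jm.+1 by rewrite /sc; case: eqP => // ->; rewrite hm.
have := hd _ _ hpr hsc (etrans evv (esym evs)); rewrite /pr /sc => hh.
have em : m = 2%N by move: hh; case: eqP => e1; case: eqP => e2; lia.
by subst m; apply: (hnr 0%N 1%N isT isT); right.
Qed.


Variables (Q : pt R -> Prop) (U : seq (vtx R I)).
Hypothesis hcov : forall q, Q q -> covers s U q.

Local Notation kept := (fun v => ~ List.In v U).

Definition vpiece (v : vtx R I) : pt R -> Prop := piece s Q v.1 (vertex_pt s v).

Lemma vertex_pt_on v : is_vertex s v -> on_seg (s v.1) (vertex_pt s v).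
Proof. by move=> /vparamP [h _]; exact: on_seg_pt. Qed.

Lemma vertex_pt_uncut v : is_vertex s v -> kept v -> ~ Q (vertex_pt s v).
Proof.
move=> hv hk /hcov /(_ v.1 (vertex_pt_on hv)) [h _]; apply: hk.
by move: h; rewrite /vertex_pt -(vertex_ptE hv); apply.
Qed.

Lemma vpiece_pieces v : is_vertex s v -> kept v -> pieces s Q (vpiece v).
Proof.
move=> hv hk; exists v.1, (vertex_pt s v).
by split; [exact: vertex_pt_on|split; [exact: vertex_pt_uncut|]].
Qed.

(* an undirected edge between kept vertices stays inside one piece: a cut
   point over its interior would force one of its ends into U *)
Lemma edge_same_piece v w : gedge s v w -> kept v -> kept w -> vpiece v = vpiece w.
Proof.
move=> hg hkv hkw; have hv := gedge_vertexl hg; have hw := gedge_vertexr hg.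
have [ei _] := hg; have [ha _] := vparamP hv; have [hb _] := vparamP hw.
have ev := vertex_ptE hv; have ew := vertex_ptE hw.
have uva := vertex_pt_uncut hv hkv; have uwb := vertex_pt_uncut hw hkw.
rewrite /vertex_pt in uva; rewrite /vpiece /vertex_pt -ei in uwb ew *.
move: (v.1) (vparam s v) (vparam s w) ha hb ev ew uva uwb hg => i a b ha hb ev ew uva uwb.
rewrite {1}ev {1}ew => hg.
apply: (piece_eq nv (on_seg_pt _ _ ha)); apply/pieceP => //; split => // t ht.
have [->|hta] := eqVneq t a; first exact: uva.
have [->|htb] := eqVneq t b; first exact: uwb.
have ht01 : 0 <= t <= 1.
  by move: ha hb => /andP [? ?] /andP [? ?]; apply/andP; case: ht; lra.
move=> /hcov /(_ i (on_seg_pt _ _ ht01)) [_ /(_ a b t hg (betw_sbetw ht hta htb) erefl)].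
by case=> h; [apply: hkv; rewrite ev|apply: hkw; rewrite ew].
Qed.

Lemma arc_above v w : garc s v w -> kept v -> kept w -> above (vpiece v) (vpiece w).
Proof.
move=> [hne [e2 [hv [hw [p [p' [hp [hp' [ep lt]]]]]]]]] hkv hkw.
have onv := vertex_pt_on hv; have onw := vertex_pt_on hw.
have [_ ea] := vparamP hv; have [_ eb] := vparamP hw.
have e3 : proj p = proj (vertex_pt s v).
  apply: (pseg_meet_unique gp hne (on_seg_proj hp)).
  - by rewrite ep; exact: on_seg_proj hp'.
  - exact: on_seg_proj onv.
  - by rewrite -ea e2 eb; exact: on_seg_proj onw.
have e4 : p = vertex_pt s v := on_seg_proj_inj nv hp onv e3.
have e5 : p' = vertex_pt s w.
  by apply: (on_seg_proj_inj nv hp' onw); rewrite -ep e3 -ea e2 eb.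
subst p p'; exists (vertex_pt s v), (vertex_pt s w).
split; first exact: piece_self onv (vertex_pt_uncut hv hkv).
by split; first exact: piece_self onw (vertex_pt_uncut hw hkw).
Qed.

Lemma cycle_depth_cycle : has_cycle_in s kept -> has_depth_cycle (pieces s Q).
Proof.
move=> [m [v [c [hm2 [hm [hW [hd [hs hnr]]]]]]]].
have hv j : (j <= m)%N -> is_vertex s (v j) /\ kept (v j).
  move=> hj; case: (ltnP j m) => h; first exact: hW.
  have -> : j = m by lia.
  by rewrite hm; apply: hW; lia.
have hkept j : (j <= m)%N -> kept (v j) by move=> /hv [].
have hedge j : (j < m)%N -> c j -> vpiece (v j) = vpiece (v j.+1).
  move=> hj hc; move: (hs j hj); rewrite hc => h.
  by apply: edge_same_piece => //; apply: hkept; lia.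
have harc j : (j < m)%N -> ~~ c j -> above (vpiece (v j)) (vpiece (v j.+1)).
  move=> hj /negbTE hc; move: (hs j hj); rewrite hc => h.
  by apply: arc_above => //; apply: hkept; lia.
apply: (depth_cycle_of_chain (m := m) (f := fun j => vpiece (v j))) => //.
- by rewrite hm.
- by move=> j /hv [hvj hk]; exact: vpiece_pieces.
- by move=> j hj; case hc: (c j); [left; exact: hedge|right; apply: harc; rewrite ?hc].
- have [[j [hj hc]]|hno] := pselect (exists j, (j < m)%N /\ ~~ c j).
    by exists j; split => //; exact: harc.
  (* otherwise the cycle would consist of undirected edges only *)
  have hcj j : (j < m)%N -> c j.
    by move=> hj; apply/negPn/negP => hc; apply: hno; exists j.
  exfalso; apply: (no_edge_only_cycle hm2 hm hd) => [j hj|j j' hjj' hj'].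
    by move: (hs j hj); rewrite hcj.
  by apply: (hnr j j' hjj' hj'); apply: hcj; lia.
Qed.

End CycleToDepthCycle.

Lemma eliminable_fvs (R : realType) (I : finType) (s : I -> seg R) (k : nat) :
  (forall i : I, nonvertical (s i)) -> general_position s ->
  eliminable_with s k -> has_fvs_of_size s k.
Proof.
move=> nv gp [Q [hk [hQ hnd]]].
have [U [hsU hvU hcU]] := cover_cut_points nv gp hQ.
exists U; split; first exact: leq_trans hsU hk.
by split => // hc; apply: hnd; exact: (cycle_depth_cycle nv gp hcU hc).
Qed.

Theorem lemma1 (R : realType) (I : finType) (s : I -> seg R) (k : nat) :
  (forall i : I, nonvertical (s i)) -> general_position s ->
  (eliminable_with s k <-> has_fvs_of_size s k).
Proof. by move=> nv gp; split; [exact: eliminable_fvs | exact: fvs_eliminable]. Qed.
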